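(* Let $(X,D)$ be an $\mathcal{F}$-metric space with respect to some $(f,\alpha)\in\mathcal{F}\times[0,\infty)$. Then the topological space $(X,\tau_{\mathcal{F}})$ is metrizable, i.e. there is a metric $d$ on $X$ whose metric topology equals $\tau_{\mathcal{F}}$.
   Context: $\mathcal{F}$ denotes the class of functions $f:(0,\infty)\to\mathbb{R}$ such that ($\mathcal{F}_1$) $f$ is non-decreasing, and ($\mathcal{F}_2$) for every sequence $(t_n)\subseteq(0,\infty)$, $\lim_n t_n=0$ iff $\lim_n f(t_n)=-\infty$. An $\mathcal{F}$-metric on a non-empty set $X$ is a map $D:X\times X\to[0,\infty)$ for which there exists $(f,\alpha)\in\mathcal{F}\times[0,\infty)$ such that: (D1) $D(x,y)=0$ iff $x=y$; (D2) $D(x,y)=D(y,x)$ for all $x,y$; (D3) for all $(x,y)\in X\times X$, every integer $N\ge2$ and every $u_1,\dots,u_N\in X$ with $u_1=x$, $u_N=y$: if $D(x,y)>0$ then $f(D(x,y))\le f\big(\sum_{i=1}^{N-1}D(u_i,u_{i+1})\big)+\alpha$. The pair $(X,D)$ is an $\mathcal{F}$-metric space. The topology $\tau_{\mathcal{F}}$ consists of all $C\subseteq X$ such that for every $x\in C$ there is $r>0$ with $B(x,r)=\{y\in X: D(y,x)<r\}\subseteq C$. *)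

From Stdlib Require Import Reals List.
Open Scope R_scope.

Definition tends_to_minus_infty (u : nat -> R) : Prop :=
  forall M : R, exists N : nat, forall n : nat, (n >= N)%nat -> u n < M.

(* The class F of functions f : (0,oo) -> R, represented as total functions
   R -> R whose values are only used on (0,oo). *)
Definition classF (f : R -> R) : Prop :=
  (forall s t : R, 0 < s -> s <= t -> f s <= f t) /\
  (forall t : nat -> R, (forall n, 0 < t n) ->
     (Un_cv t 0 <-> tends_to_minus_infty (fun n => f (t n)))).

Fixpoint chain_sum {X : Type} (D : X -> X -> R) (x : X) (l : list X) : R :=
  match l with
  | nil => 0
  | y :: l' => D x y + chain_sum D y l'
  end.

(* D is an F-metric on X w.r.t. (f, alpha).  A chain u_1 = x, ..., u_N = y
   with N >= 2 is encoded as x :: mid ++ [y], mid arbitrary. *)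
Definition is_F_metric {X : Type} (D : X -> X -> R) (f : R -> R) (alpha : R)
  : Prop :=
  classF f /\ 0 <= alpha /\
  (forall x y, 0 <= D x y) /\
  (forall x y, D x y = 0 <-> x = y) /\
  (forall x y, D x y = D y x) /\
  (forall (x y : X) (mid : list X), 0 < D x y ->
      f (D x y) <= f (chain_sum D x (mid ++ y :: nil)) + alpha).

Definition F_open {X : Type} (D : X -> X -> R) (C : X -> Prop) : Prop :=
  forall x, C x -> exists r, 0 < r /\ (forall y, D y x < r -> C y).

Definition is_metric {X : Type} (d : X -> X -> R) : Prop :=
  (forall x y, 0 <= d x y) /\
  (forall x y, d x y = 0 <-> x = y) /\
  (forall x y, d x y = d y x) /\
  (forall x y z, d x z <= d x y + d y z).

Definition metric_open {X : Type} (d : X -> X -> R) (C : X -> Prop) : Prop :=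
  forall x, C x -> exists r, 0 < r /\ (forall y, d x y < r -> C y).

From Stdlib Require Import Reals List Lra Classical.
Open Scope R_scope.

(* Let [d x y] be the infimum, over all chains
   x = u_1, ..., u_N = y, of the chain length sum D(u_i, u_{i+1}).  Then:
   - d <= D (the trivial chain), d is symmetric (reverse a chain) and
     satisfies the triangle inequality (concatenate chains), so d is a
     pseudometric;
   - axiom (D3) together with (F2) shows that chains of small length join
     points at small D-distance: for every e > 0 there is del > 0 with
     (chain sum < del) -> D x y < e; hence also (d x y < del) -> D x y < e.
   The last fact gives d x y = 0 -> x = y, so d is a metric, and together
   with d <= D it shows that d-balls and D-balls are mutually nested around
   every point, so both topologies coincide. *)

Definition is_inf (S : R -> Prop) (m : R) : Prop :=
  (forall v, S v -> m <= v) /\ (forall b, (forall v, S v -> b <= v) -> b <= m).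

Lemma inf_exists (S : R -> Prop) (lb : R) :
  (forall v, S v -> lb <= v) -> (exists v, S v) -> { m : R | is_inf S m }.
Proof.
  intros Hlb Hne.
  assert (Hbound : bound (fun v => S (- v))).
  { exists (- lb). intros v Hv. specialize (Hlb _ Hv). lra. }
  assert (Hne' : exists v, S (- v)).
  { destruct Hne as [v Hv]. exists (- v). now rewrite Ropp_involutive. }
  destruct (completeness _ Hbound Hne') as [M [Hup Hleast]].
  exists (- M); split.
  - intros v Hv. assert (v >= - M) as Hge; [|lra].
    apply Rle_ge, Ropp_le_cancel. rewrite Ropp_involutive.
    apply Hup. now rewrite Ropp_involutive.
  - intros b Hb. assert (M <= - b); [|lra].
    apply Hleast. intros v Hv. specialize (Hb _ Hv). lra.
Qed.

Lemma inf_approx (S : R -> Prop) (m e : R) :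
  is_inf S m -> 0 < e -> exists v, S v /\ v < m + e.
Proof.
  intros [_ Hgreatest] He. apply NNPP; intros Hnone.
  assert (m + e <= m); [|lra].
  apply Hgreatest; intros v Hv.
  apply Rnot_lt_le; intros Hlt. apply Hnone. now exists v.
Qed.

Section ChainSums.
Context {X : Type} (D : X -> X -> R).

Lemma chain_sum_split (x z : X) (l l' : list X) :
  chain_sum D x (l ++ z :: l') =
  chain_sum D x (l ++ z :: nil) + chain_sum D z l'.
Proof.
  revert x; induction l as [|a l IH]; intros x; simpl.
  - lra.
  - rewrite IH; lra.
Qed.

Lemma chain_sum_rev (D_sym : forall x y, D x y = D y x) (x y : X) (mid : list X) :
  chain_sum D x (mid ++ y :: nil) = chain_sum D y (rev mid ++ x :: nil).
Proof.
  revert x; induction mid as [|a mid IH]; intros x; simpl.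
  - rewrite D_sym; lra.
  - rewrite IH, <- app_assoc; simpl.
    rewrite (chain_sum_split y a (rev mid) (x :: nil)); simpl.
    rewrite (D_sym x a); lra.
Qed.

Hypothesis D_nonneg : forall x y, 0 <= D x y.

Lemma chain_sum_nonneg (x : X) (l : list X) : 0 <= chain_sum D x l.
Proof.
  revert x; induction l as [|a l IH]; intros x; simpl.
  - lra.
  - specialize (IH a); specialize (D_nonneg x a); lra.
Qed.

Lemma chain_sum_zero_eq (D_zero : forall x y, D x y = 0 <-> x = y)
  (x y : X) (l : list X) :
  chain_sum D x (l ++ y :: nil) = 0 -> x = y.
Proof.
  revert x; induction l as [|a l IH]; intros x; simpl; intros Hsum.
  - apply D_zero; lra.
  - pose proof (chain_sum_nonneg a (l ++ y :: nil)) as Hrest.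
    pose proof (D_nonneg x a) as Hxa.
    assert (Hxa0 : D x a = 0) by lra.
    apply D_zero in Hxa0; subst a.
    apply IH; lra.
Qed.

End ChainSums.

(* Given e, take del = 2^-N with
   f(2^-N) < f(e) - alpha; if some chain of length s < del had D x y >= e,
   then f(e) <= f(D x y) <= f(s) + alpha <= f(del) + alpha < f(e). *)
Lemma small_chain_small_distance {X : Type} (D : X -> X -> R) (f : R -> R)
  (alpha : R) :
  is_F_metric D f alpha ->
  forall e, 0 < e -> exists del, 0 < del /\
    forall x y mid, chain_sum D x (mid ++ y :: nil) < del -> D x y < e.
Proof.
  intros [[f_mono f_F2] [_ [D_nonneg [D_zero [_ D3]]]]] e He.
  assert (half_pos : forall n, 0 < 1 / 2 ^ n).
  { intros n. apply Rdiv_lt_0_compat; [lra | apply pow_lt; lra]. }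
  destruct (proj1 (f_F2 _ half_pos) (cv_pow_half 1) (f e - alpha)) as [N HN].
  specialize (HN N (le_n N)); simpl in HN.
  exists (1 / 2 ^ N); split; [apply half_pos |].
  intros x y mid Hsmall.
  set (s := chain_sum D x (mid ++ y :: nil)) in *.
  destruct (Rle_lt_dec (D x y) 0) as [Hxy0 | Hxy_pos]; [lra |].
  assert (s_pos : 0 < s).
  { destruct (chain_sum_nonneg D D_nonneg x (mid ++ y :: nil)) as [Hlt | Heq];
      [exact Hlt |].
    symmetry in Heq. apply (chain_sum_zero_eq D D_nonneg D_zero) in Heq.
    subst y. rewrite (proj2 (D_zero x x) eq_refl) in Hxy_pos. lra. }
  pose proof (D3 x y mid Hxy_pos) as Hchain; fold s in Hchain.
  pose proof (f_mono s _ s_pos (Rlt_le _ _ Hsmall)) as Hfs.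
  destruct (Rlt_le_dec (D x y) e) as [Hlt | Hge]; [exact Hlt |].
  pose proof (f_mono e (D x y) He Hge). lra.
Qed.

Section ChainDistance.
Context {X : Type} (D : X -> X -> R).
Hypothesis D_nonneg : forall x y, 0 <= D x y.

Definition chain_length (x y : X) (v : R) : Prop :=
  exists mid, v = chain_sum D x (mid ++ y :: nil).

Lemma chain_length_nonneg (x y : X) (v : R) : chain_length x y v -> 0 <= v.
Proof. intros [mid ->]. apply chain_sum_nonneg, D_nonneg. Qed.

Lemma chain_length_direct (x y : X) : chain_length x y (D x y).
Proof. exists nil; simpl; lra. Qed.

Definition chain_dist (x y : X) : R :=
  proj1_sig (inf_exists (chain_length x y) 0 (chain_length_nonneg x y)
                        (ex_intro _ _ (chain_length_direct x y))).

Lemma chain_dist_inf (x y : X) : is_inf (chain_length x y) (chain_dist x y).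
Proof. unfold chain_dist. apply proj2_sig. Qed.

Lemma chain_dist_le_chain (x y : X) (mid : list X) :
  chain_dist x y <= chain_sum D x (mid ++ y :: nil).
Proof. apply (chain_dist_inf x y). now exists mid. Qed.

Lemma chain_dist_le_D (x y : X) : chain_dist x y <= D x y.
Proof. apply (chain_dist_inf x y), chain_length_direct. Qed.

Lemma chain_dist_nonneg (x y : X) : 0 <= chain_dist x y.
Proof. apply (chain_dist_inf x y), chain_length_nonneg. Qed.

Lemma chain_dist_approx (x y : X) (e : R) :
  0 < e -> exists mid, chain_sum D x (mid ++ y :: nil) < chain_dist x y + e.
Proof.
  intros He.
  destruct (inf_approx _ _ _ (chain_dist_inf x y) He) as [v [[mid ->] Hv]].
  now exists mid.
Qed.

(* Reversing chains shows symmetry. *)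
Lemma chain_dist_sym (D_sym : forall x y, D x y = D y x) (x y : X) :
  chain_dist x y = chain_dist y x.
Proof.
  assert (Hle : forall a b, chain_dist a b <= chain_dist b a).
  { intros a b. apply (chain_dist_inf b a). intros v [mid ->].
    rewrite (chain_sum_rev D D_sym). apply chain_dist_le_chain. }
  apply Rle_antisym; apply Hle.
Qed.

(* Concatenating nearly optimal chains shows the triangle inequality. *)
Lemma chain_dist_triangle (x y z : X) :
  chain_dist x z <= chain_dist x y + chain_dist y z.
Proof.
  apply Rnot_lt_le; intros Hlt.
  set (e := (chain_dist x z - chain_dist x y - chain_dist y z) / 2).
  assert (He : 0 < e) by (unfold e; lra).
  destruct (chain_dist_approx x y e He) as [m1 H1].
  destruct (chain_dist_approx y z e He) as [m2 H2].
  pose proof (chain_dist_le_chain x z (m1 ++ y :: m2)) as Hcat.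
  rewrite <- app_assoc in Hcat; simpl in Hcat.
  rewrite chain_sum_split in Hcat.
  unfold e in *; lra.
Qed.

End ChainDistance.

Lemma small_chain_dist_small_distance {X : Type} (D : X -> X -> R) (f : R -> R)
  (alpha : R) (HD : is_F_metric D f alpha)
  (D_nonneg : forall x y, 0 <= D x y) :
  forall e, 0 < e -> exists del, 0 < del /\
    forall x y, chain_dist D D_nonneg x y < del -> D x y < e.
Proof.
  intros e He.
  destruct (small_chain_small_distance D f alpha HD e He) as [del [Hdel Hsmall]].
  exists del; split; [exact Hdel |].
  intros x y Hxy.
  destruct (chain_dist_approx D D_nonneg x y (del - chain_dist D D_nonneg x y))
    as [mid Hmid]; [lra |].
  apply (Hsmall x y mid); lra.
Qed.

Lemma chain_dist_is_metric {X : Type} (D : X -> X -> R) (f : R -> R) (alpha : R)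
  (HD : is_F_metric D f alpha) (D_nonneg : forall x y, 0 <= D x y) :
  is_metric (chain_dist D D_nonneg).
Proof.
  pose proof HD as [_ [_ [_ [D_zero [D_sym _]]]]].
  split; [apply chain_dist_nonneg |].
  split; [| split; [apply chain_dist_sym, D_sym | apply chain_dist_triangle]].
  intros x y; split; intros Hxy.
  - apply NNPP; intros Hneq.
    assert (Hpos : 0 < D x y).
    { destruct (D_nonneg x y) as [Hlt | Heq]; [exact Hlt |].
      exfalso; apply Hneq, D_zero; auto. }
    destruct (small_chain_dist_small_distance D f alpha HD D_nonneg _ Hpos)
      as [del [Hdel Hsmall]].
    specialize (Hsmall x y ltac:(lra)); lra.
  - subst y. pose proof (chain_dist_le_D D D_nonneg x x).
    pose proof (chain_dist_nonneg D D_nonneg x x).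
    rewrite (proj2 (D_zero x x) eq_refl) in *; lra.
Qed.

(* The metric topology of the chain distance is tau_F: every D-ball contains
   a d-ball (small-distance lemma) and every d-ball contains the D-ball of
   the same radius (d <= D). *)
Lemma chain_dist_topology {X : Type} (D : X -> X -> R) (f : R -> R) (alpha : R)
  (HD : is_F_metric D f alpha) (D_nonneg : forall x y, 0 <= D x y)
  (C : X -> Prop) :
  metric_open (chain_dist D D_nonneg) C <-> F_open D C.
Proof.
  pose proof HD as [_ [_ [_ [_ [D_sym _]]]]].
  split; intros Hopen x Cx; destruct (Hopen x Cx) as [r [Hr Hball]].
  - exists r; split; [exact Hr |].
    intros y Hy. apply Hball.
    pose proof (chain_dist_le_D D D_nonneg x y). rewrite D_sym in Hy. lra.
  - destruct (small_chain_dist_small_distance D f alpha HD D_nonneg r Hr)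
      as [del [Hdel Hsmall]].
    exists del; split; [exact Hdel |].
    intros y Hy. apply Hball. rewrite D_sym. now apply Hsmall.
Qed.

Theorem mainTheorem2 (X : Type) (D : X -> X -> R) (f : R -> R) (alpha : R) :
  is_F_metric D f alpha ->
  exists d : X -> X -> R, is_metric d /\
    (forall C : X -> Prop, metric_open d C <-> F_open D C).
Proof.
  intros HD.
  pose proof HD as [_ [_ [D_nonneg _]]].
  exists (chain_dist D D_nonneg); split.
  - exact (chain_dist_is_metric D f alpha HD D_nonneg).
  - exact (chain_dist_topology D f alpha HD D_nonneg).
Qed.
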